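(* Let $\epsilon>0$, let $\nu$ be a probability distribution over $\{0,1,2,\ldots\}$ (with $\nu_i$ the weight of prior policy $\pi_{k-i}$) with $\mathbb E_{i\sim\nu}[i+1]<\infty$, and set $$\epsilon_{\mathrm{GPI}}=\frac{\epsilon}{\mathbb E_{i\sim\nu}[\,i+1\,]}.$$ Let $\pi_{k+1}$ be the policy produced at update $k$ from prior policies $\pi_k,\pi_{k-1},\ldots$, and assume that at every update the expected one-step TV distance under each state visitation distribution $d^{\pi_{k-i}}$ is bounded by $\epsilon_{\mathrm{GPI}}/2$, i.e. $\mathbb E_{s\sim d^{\pi_{k-i}}}[\mathrm{TV}(\pi_{k-j+1},\pi_{k-j})(s)]\le\epsilon_{\mathrm{GPI}}/2$ for all $0\le j\le i$ with $\nu_i>0$. Then the magnitude of the generalized penalty term evaluated at $\pi=\pi_{k+1}$, $$\frac{2\gamma C^{\pi,\pi_k}}{(1-\gamma)^2}\,\mathbb E_{i\sim\nu}\!\left[\mathbb E_{s\sim d^{\pi_{k-i}}}\big[\mathrm{TV}(\pi,\pi_{k-i})(s)\big]\right],$$ is no greater than the magnitude of the on-policy penalty term $\frac{2\gamma C^{\pi,\pi_k}}{(1-\gamma)^2}\mathbb E_{s\sim d^{\pi_k}}[\mathrm{TV}(\pi,\pi_k)(s)]$ under the on-policy update (i.e. under the constraint $\mathbb E_{s\sim d^{\pi_k}}[\mathrm{TV}(\pi,\pi_k)(s)]\le\epsilon/2$); equivalently, $\mathbb E_{i\sim\nu}[\mathbb E_{s\sim d^{\pi_{k-i}}}[\ma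thrm{TV}(\pi_{k+1},\pi_{k-i})(s)]]\le\epsilon/2$.
   Context: We work with an infinite-horizon discounted Markov decision process with state space $\mathcal S$, action space $\mathcal A$, transition kernel $p$, reward $r$, initial state distribution $\rho_0$, and discount $\gamma\in[0,1)$. A policy $\pi$ maps each state $s$ to a distribution $\pi(\cdot\mid s)$ over actions; $\pi_0,\pi_1,\ldots$ is the sequence of policies produced by successive updates. The normalized discounted state visitation distribution of $\pi$ is $d^{\pi}(s)=(1-\gamma)\sum_{t=0}^\infty\gamma^t\,\mathbb P(s_t=s\mid\rho_0,\pi,p)$. $A^{\pi}=Q^{\pi}-V^{\pi}$ is the advantage function of $\pi$, and $C^{\pi,\pi_k}=\max_{s\in\mathcal S}|\mathbb E_{a\sim\pi(\cdot\mid s)}[A^{\pi_k}(s,a)]|$. $\mathrm{TV}(\pi,\pi')(s)$ is the total variation distance between $\pi(\cdot\mid s)$ and $\pi'(\cdot\mid s)$. *)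

From HB Require Import structures.
From mathcomp Require Import all_boot all_order all_algebra.
From mathcomp Require Import all_classical all_reals all_analysis.
Set Implicit Arguments. Unset Strict Implicit. Unset Printing Implicit Defensive.
Import Order.TTheory GRing.Theory Num.Theory.
Import numFieldNormedType.Exports.
Local Open Scope ring_scope.

Section MDP.
Variables (R : realType) (S A : finType).

Definition infsum (u : nat -> R) : R := limn (series u).

Definition is_dist (T : finType) (mu : T -> R) : Prop :=
  (forall x, 0 <= mu x) /\ \sum_(x : T) mu x = 1.

(* a policy: pi s a = pi(a | s) *)
Definition policy := S -> A -> R.
Definition is_policy (pi : policy) : Prop := forall s, is_dist (pi s).

(* transition trans_kernel: p s a s' = P(s' | s, a) *)
Definition trans_kernel := S -> A -> S -> R.
Definition is_kernel (p : trans_kernel) : Prop := forall s a, is_dist (p s a).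

Definition mdp_step (p : trans_kernel) (pi : policy) (mu : S -> R) : S -> R :=
  fun s' => \sum_(s : S) \sum_(a : A) mu s * pi s a * p s a s'.

Definition state_dist (p : trans_kernel) (pi : policy) (mu : S -> R) (t : nat) : S -> R :=
  iter t (mdp_step p pi) mu.

Definition visitation (p : trans_kernel) (rho0 : S -> R) (gamma : R) (pi : policy)
    (s : S) : R :=
  (1 - gamma) * infsum (fun t => gamma ^+ t * state_dist p pi rho0 t s).

Definition point_dist (s : S) : S -> R := fun s' => (s' == s)%:R.

Definition Vfun (p : trans_kernel) (r : S -> A -> R) (gamma : R) (pi : policy)
    (s : S) : R :=
  infsum (fun t => gamma ^+ t *
    \sum_(s' : S) \sum_(a : A) state_dist p pi (point_dist s) t s' * pi s' a * r s' a).

Definition Qfun (p : trans_kernel) (r : S -> A -> R) (gamma : R) (pi : policy)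
    (s : S) (a : A) : R :=
  r s a + gamma * \sum_(s' : S) p s a s' * Vfun p r gamma pi s'.

Definition Adv (p : trans_kernel) (r : S -> A -> R) (gamma : R) (pi : policy)
    (s : S) (a : A) : R :=
  Qfun p r gamma pi s a - Vfun p r gamma pi s.

Definition Cconst (p : trans_kernel) (r : S -> A -> R) (gamma : R) (pi pik : policy) : R :=
  \big[Num.max/0]_(s : S) `| \sum_(a : A) pi s a * Adv p r gamma pik s a |.

Definition TV (pi pi' : policy) (s : S) : R :=
  2^-1 * \sum_(a : A) `| pi s a - pi' s a |.

Definition expTV (p : trans_kernel) (rho0 : S -> R) (gamma : R) (mu pi pi' : policy) : R :=
  \sum_(s : S) visitation p rho0 gamma mu s * TV pi pi' s.

End MDP.

(* By the triangle inequality for TV, the distance from pi_{k+1} back to pi_{k-i} telescopes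
   into the i+1 one-step distances between consecutive policies, each at most eps_GPI/2 under
   d^{pi_{k-i}}.  Averaging over i ~ nu gives E_nu[i+1] * eps_GPI/2 = eps/2, and the penalty
   prefactor 2 gamma C / (1-gamma)^2 is nonnegative. *)
From HB Require Import structures.
From mathcomp Require Import all_boot all_order all_algebra.
From mathcomp Require Import all_classical all_reals all_analysis.
Import Order.TTheory GRing.Theory Num.Theory.
Import numFieldNormedType.Exports.
Local Open Scope ring_scope.

Section InfiniteSums.
Variable R : realType.

Lemma infsum_ge0 (u : R^nat) :
  (forall n, 0 <= u n) -> cvgn (series u) -> 0 <= infsum u.
Proof.
move=> u_ge0 cu; apply: limr_ge cu _; apply: nearW => n.
exact: sumr_ge0.
Qed.

Lemma ler_infsum {u v : R^nat} :
  cvgn (series u) -> cvgn (series v) -> (forall n, u n <= v n) ->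
  infsum u <= infsum v.
Proof. exact: lim_series_le. Qed.

Lemma infsumMr (u : R^nat) (c : R) :
  cvgn (series u) -> infsum (fun n => u n * c) = infsum u * c.
Proof.
move=> cu; rewrite /infsum mulrC -[c * _]/(c *: limn (series u)) -lim_seriesZ //.
by congr (limn (series _)); apply/funext => n; rewrite mulrC.
Qed.

End InfiniteSums.

Section Penalty.
Variables (R : realType) (S A : finType).
Variables (p : trans_kernel R S A) (rho0 : S -> R) (gamma : R).
Hypotheses (p_kernel : is_kernel p) (rho0_dist : is_dist rho0).
Hypotheses (gamma_ge0 : 0 <= gamma) (gamma_lt1 : gamma < 1).

Lemma state_dist_is_dist (pi : policy R S A) (mu : S -> R) (t : nat) :
  is_policy pi -> is_dist mu -> is_dist (state_dist p pi mu t).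
Proof.
move=> pi_policy [mu_ge0 mu_sum1]; elim: t => [|t [IH_ge0 IH_sum1]] //.
rewrite /state_dist iterS -/(state_dist p pi mu t) /mdp_step; split.
  move=> s'; apply: sumr_ge0 => s _; apply: sumr_ge0 => a _.
  by rewrite !mulr_ge0 //; [apply: (pi_policy s).1 | apply: (p_kernel s a).1].
rewrite exchange_big /= -IH_sum1; apply: eq_bigr => s _.
rewrite exchange_big /= -[RHS]mulr1 -(pi_policy s).2 mulr_sumr.
by apply: eq_bigr => a _; rewrite -mulr_sumr (p_kernel s a).2 mulr1.
Qed.

Lemma visitation_ge0 (pi : policy R S A) (s : S) :
  is_policy pi -> 0 <= visitation p rho0 gamma pi s.
Proof.
move=> pi_policy; apply: mulr_ge0; first by rewrite subr_ge0 ltW.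
have d_dist t := state_dist_is_dist pi rho0 t pi_policy rho0_dist.
have term_ge0 t : 0 <= gamma ^+ t * state_dist p pi rho0 t s.
  by rewrite mulr_ge0 ?exprn_ge0 ?(d_dist t).1.
apply: infsum_ge0 => //.
have term_le_geometric t : gamma ^+ t * state_dist p pi rho0 t s <= geometric 1 gamma t.
  rewrite /geometric /= mul1r ler_piMr ?exprn_ge0 //.
  rewrite -(d_dist t).2 (bigD1 s) //= lerDl.
  by apply: sumr_ge0 => x _; apply: (d_dist t).1.
apply: series_le_cvg term_ge0 _ term_le_geometric _.
  by move=> t; rewrite /geometric /= mul1r exprn_ge0.
by apply: is_cvg_geometric_series; rewrite ger0_norm.
Qed.

Lemma TV_ge0 (pi pi' : policy R S A) (s : S) : 0 <= TV pi pi' s.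
Proof. by rewrite /TV mulr_ge0 // sumr_ge0. Qed.

Lemma TV_triangle (pi1 pi2 pi3 : policy R S A) (s : S) :
  TV pi1 pi3 s <= TV pi1 pi2 s + TV pi2 pi3 s.
Proof.
rewrite /TV -mulrDr ler_wpM2l // -big_split /=.
by apply: ler_sum => a _; apply: ler_distD.
Qed.

Lemma TV_xx (pi : policy R S A) (s : S) : TV pi pi s = 0.
Proof. by rewrite /TV big1 ?mulr0 // => a _; rewrite subrr normr0. Qed.

Variable mu : policy R S A.
Hypothesis mu_policy : is_policy mu.

Lemma expTV_ge0 (pi pi' : policy R S A) : 0 <= expTV p rho0 gamma mu pi pi'.
Proof. by apply: sumr_ge0 => s _; rewrite mulr_ge0 ?visitation_ge0 ?TV_ge0. Qed.

Lemma expTV_triangle (pi1 pi2 pi3 : policy R S A) :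
  expTV p rho0 gamma mu pi1 pi3 <=
    expTV p rho0 gamma mu pi1 pi2 + expTV p rho0 gamma mu pi2 pi3.
Proof.
rewrite /expTV -big_split /=; apply: ler_sum => s _.
by rewrite -mulrDr ler_wpM2l ?visitation_ge0 ?TV_triangle.
Qed.

Lemma expTV_telescope (q : nat -> policy R S A) (n : nat) :
  expTV p rho0 gamma mu (q 0%N) (q n) <=
    \sum_(j < n) expTV p rho0 gamma mu (q j) (q j.+1).
Proof.
elim: n => [|n IH].
  by rewrite big_ord0 /expTV big1 // => s _; rewrite TV_xx mulr0.
rewrite big_ord_recr /=; apply: le_trans (expTV_triangle _ (q n) _) _.
by rewrite lerD2r.
Qed.

Lemma expTV_lag_le (pi : int -> policy R S A) (k : int) (i : nat) (c : R) :
  (forall j : nat, (j <= i)%N ->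
     expTV p rho0 gamma mu (pi (k - j%:Z + 1)) (pi (k - j%:Z)) <= c) ->
  expTV p rho0 gamma mu (pi (k + 1)) (pi (k - i%:Z)) <= (i.+1)%:R * c.
Proof.
move=> one_step_le.
have lag_succ (j : nat) : k - (j.+1)%:Z + 1 = k - j%:Z.
  by rewrite -addn1 PoszD opprD addrA subrK.
have := expTV_telescope (fun j => pi (k - j%:Z + 1)) i.+1.
rewrite subr0 lag_succ => /le_trans; apply.
rewrite mulr_natl -[in X in _ <= X](card_ord i.+1) -sumr_const; apply: ler_sum => j _.
by rewrite lag_succ one_step_le // -ltnS.
Qed.

End Penalty.

Lemma Cconst_ge0 (R : realType) (S A : finType) (p : trans_kernel R S A)
    (r : S -> A -> R) (gamma : R) (pi pik : policy R S A) :
  0 <= Cconst p r gamma pi pik.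
Proof. exact: bigmax_ge_id. Qed.

Theorem theorem2 (R : realType) (S A : finType)
  (p : trans_kernel R S A) (r : S -> A -> R) (rho0 : S -> R) (gamma : R)
  (pi : int -> policy R S A) (k : int)
  (nu : nat -> R) (eps : R) :
  is_kernel p -> is_dist rho0 -> 0 <= gamma -> gamma < 1 ->
  (forall n, is_policy (pi n)) ->
  0 < eps ->
  (forall i, 0 <= nu i) ->
  cvgn (series nu) -> infsum nu = 1 ->
  cvgn (series (fun i => nu i * (i.+1)%:R)) ->
  let epsGPI := eps / infsum (fun i => nu i * (i.+1)%:R) in
  (forall i j : nat, 0 < nu i -> (j <= i)%N ->
     expTV p rho0 gamma (pi (k - i%:Z)) (pi (k - j%:Z + 1)) (pi (k - j%:Z))
       <= epsGPI / 2) ->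
  let Epen := infsum (fun i => nu i *
       expTV p rho0 gamma (pi (k - i%:Z)) (pi (k + 1)) (pi (k - i%:Z))) in
  Epen <= eps / 2 /\
  2 * gamma * Cconst p r gamma (pi (k + 1)) (pi k) / (1 - gamma) ^+ 2 * Epen
    <= 2 * gamma * Cconst p r gamma (pi (k + 1)) (pi k) / (1 - gamma) ^+ 2 * (eps / 2).
Proof.
move=> p_kernel rho0_dist gamma_ge0 gamma_lt1 pi_policy eps_gt0 nu_ge0 nu_cvg nu_sum1 w_cvg epsGPI one_step_le Epen.
set w := fun i : nat => nu i * (i.+1)%:R.
set E := fun i : nat => expTV p rho0 gamma (pi (k - i%:Z)) (pi (k + 1)) (pi (k - i%:Z)).
set c := epsGPI / 2.
have w_ge0 i : 0 <= w i by rewrite mulr_ge0.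
have w_sum_ge1 : 1 <= infsum w.
  by rewrite -nu_sum1 ler_infsum // => i; rewrite ler_peMr // ler1n.
have w_sum_gt0 : 0 < infsum w := lt_le_trans ltr01 w_sum_ge1.
have c_ge0 : 0 <= c by rewrite divr_ge0 // divr_ge0 // ltW.
have term_le i : nu i * E i <= w i * c.
  have [nu_i0|nu_i_gt0] := eqVneq (nu i) 0; first by rewrite nu_i0 mul0r mulr_ge0.
  have {}nu_i_gt0 : 0 < nu i by rewrite lt_def nu_i_gt0 nu_ge0.
  rewrite -mulrA ler_wpM2l // /E expTV_lag_le // => j.
  exact: one_step_le.
have term_ge0 i : 0 <= nu i * E i by rewrite mulr_ge0 ?expTV_ge0.
have wc_cvg : cvgn (series (fun i => w i * c)).
  have -> : (fun i => w i * c) = c *: w by apply: funext => i; rewrite mulrC.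
  exact: is_cvg_seriesZ.
have Epen_le : Epen <= eps / 2.
  have -> : eps / 2 = infsum w * c.
    by rewrite /c /epsGPI mulrA mulrCA divff ?mulr1 // gt_eqF.
  rewrite /Epen -infsumMr //; apply: ler_infsum => //.
  exact: series_le_cvg term_ge0 (fun i => mulr_ge0 (w_ge0 i) c_ge0) term_le wc_cvg.
split=> //; apply: ler_wpM2l => //.
have one_sub_gamma_ge0 : 0 <= 1 - gamma by rewrite subr_ge0 ltW.
by rewrite mulr_ge0 ?invr_ge0 ?exprn_ge0 // mulr_ge0 ?Cconst_ge0 // mulr_ge0.
Qed.
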